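(* If a grid-labelled graph $G$ satisfies $D(G)=D(G^\Gamma)$, then the corresponding density matrix $\rho(G)$ has positive semidefinite partial transpose, whether $G$ is interpreted as an $L$-graph, a $Q$-graph, a weighted ($L$- or $Q$-) graph, or a hybrid graph.
   Context: Grid-labelled graph: vertices $(i,j)$ on a grid, vertex $(i,j)$ identified with $|ij\rangle\in\mathbb{C}^{m_1}\otimes\mathbb{C}^{m_2}$. An $L$-edge $\{(i,j),(k,l)\}$ has state $\frac1{\sqrt2}(|ij\rangle-|kl\rangle)$ and a $Q$-edge has state $\frac1{\sqrt2}(|ij\rangle+|kl\rangle)$; an $L$-graph has only $L$-edges, a $Q$-graph only $Q$-edges, a hybrid graph both kinds; edges may carry positive weights $w_e$. The density matrix is $\rho(G)=\frac{1}{\sum_e w_e}\sum_e w_e|e\rangle\langle e|$, i.e. the normalized Laplacian ($D-A$, $D+A$, or $L(S_l)+Q(S_q)$ for hybrid graphs with $S_l,S_q$ the $L$- and $Q$-subgraphs). $D(G)$ is the diagonal matrix of (weighted) vertex degrees. The partial transpose graph $G^\Gamma$ has the same vertices and contains edge $\{(i,l),(k,j)\}$ (same type and weight) iff $G$ contains edge $\{(i,j),(k,l)\}$. The partial transpose is taken with respect to either factor of $\mathbb{C}^{m_1}\otimes\mathbb{C}^{m_2}$. *)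

From HB Require Import structures.
From mathcomp Require Import all_boot all_order all_algebra.
Set Implicit Arguments. Unset Strict Implicit. Unset Printing Implicit Defensive.
Import Order.TTheory GRing.Theory Num.Theory.
Local Open Scope ring_scope.

(* Grid-labelled graphs on the vertex set 'I_m1 * 'I_m2; vertex (i,j) is
   identified with the basis vector |ij> of C^{m1} (x) C^{m2}, realised as the
   basis vector of index [mxvec_index i j] of C^{m1*m2}. *)
Section GridGraphs.
Variables (C : numClosedFieldType) (m1 m2 : nat).

Definition vtx := ('I_m1 * 'I_m2)%type.

Definition unvec (p : 'I_(m1 * m2)) : vtx :=
  enum_val (cast_ord (esym (@mxvec_cast m1 m2)) p).

Definition ket (x : vtx) : 'cV[C]_(m1 * m2) := delta_mx (mxvec_index x.1 x.2) 0.

Definition proj (v : 'cV[C]_(m1 * m2)) : 'M[C]_(m1 * m2) :=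
  v *m (map_mx Num.conj v)^T.

Definition Lstate (x y : vtx) : 'cV[C]_(m1 * m2) := (sqrtC 2)^-1 *: (ket x - ket y).
Definition Qstate (x y : vtx) : 'cV[C]_(m1 * m2) := (sqrtC 2)^-1 *: (ket x + ket y).

(* A (weighted, hybrid) grid-labelled graph is given by two weight functions
   wl, wq on pairs of vertices: wl x y > 0 iff {x,y} is an L-edge (of weight
   wl x y), wq x y > 0 iff {x,y} is a Q-edge.  *)
Definition is_grid_graph (wl wq : vtx -> vtx -> C) : Prop :=
  [/\ forall x y, 0 <= wl x y /\ 0 <= wq x y,
      forall x y, wl x y = wl y x /\ wq x y = wq y x,
      forall x, wl x x = 0 /\ wq x x = 0 &
      forall x y, wl x y = 0 \/ wq x y = 0].

(* total edge weight \sum_e w_e: each unordered pair is counted twice in the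
   double sum, hence the factor 1/2 *)
Definition total_weight (wl wq : vtx -> vtx -> C) : C :=
  2^-1 * \sum_(x : vtx) \sum_(y : vtx) (wl x y + wq x y).

(* rho(G) = (1/sum_e w_e) sum_e w_e |e><e|  (again each unordered edge appears
   twice in the double sum, hence 1/2) *)
Definition rho (wl wq : vtx -> vtx -> C) : 'M[C]_(m1 * m2) :=
  (total_weight wl wq)^-1 *:
   (2^-1 *: \sum_(x : vtx) \sum_(y : vtx)
        (wl x y *: proj (Lstate x y) + wq x y *: proj (Qstate x y))).

Definition degree (wl wq : vtx -> vtx -> C) (x : vtx) : C :=
  \sum_(y : vtx) (wl x y + wq x y).

Definition Dmat (wl wq : vtx -> vtx -> C) : 'M[C]_(m1 * m2) :=
  \matrix_(p, q) (if p == q then degree wl wq (unvec p) else 0).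

(* partial transpose graph: {(i,l),(k,j)} is an edge of G^Gamma (same type and
   weight) iff {(i,j),(k,l)} is an edge of G *)
Definition ptgraph (w : vtx -> vtx -> C) : vtx -> vtx -> C :=
  fun x y => w (x.1, y.2) (y.1, x.2).

Definition ptrans2 (A : 'M[C]_(m1 * m2)) : 'M[C]_(m1 * m2) :=
  \matrix_(p, q) A (mxvec_index (unvec p).1 (unvec q).2)
                   (mxvec_index (unvec q).1 (unvec p).2).
Definition ptrans1 (A : 'M[C]_(m1 * m2)) : 'M[C]_(m1 * m2) :=
  \matrix_(p, q) A (mxvec_index (unvec q).1 (unvec p).2)
                   (mxvec_index (unvec p).1 (unvec q).2).

End GridGraphs.

Definition psd (C : numClosedFieldType) (n : nat) (A : 'M[C]_n) : Prop :=
  A = (map_mx Num.conj A)^T /\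
  forall v : 'cV[C]_n, 0 <= ((map_mx Num.conj v)^T *m A *m v) 0 0.

From mathcomp Require Import all_boot all_order all_algebra.
From mathcomp Require Import ring.
Import Order.TTheory GRing.Theory Num.Theory.
Local Open Scope ring_scope.
Set Implicit Arguments. Unset Strict Implicit.

(* Summing the edge projectors entrywise shows that rho(G) is the hybrid
   Laplacian D - A_L + A_Q divided by 2 sum_e w_e.  The partial transpose maps
   the adjacency parts of G to those of G^Gamma by the very definition of
   G^Gamma and keeps the diagonal in place, so when D(G) = D(G^Gamma) (which
   also fixes the total weight, half the trace of D) we get
   rho(G)^Gamma = rho(G^Gamma).  The latter is a nonnegative combination of
   rank-one projectors, hence positive semidefinite.  The partial transpose on
   the first factor is the full transpose of the one on the second, and
   transposition preserves positive semidefiniteness. *)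

Section PositiveSemidefinite.
Variable C : numClosedFieldType.

Lemma map_conj_mxK m n (A : 'M[C]_(m, n)) :
  map_mx Num.conj (map_mx Num.conj A) = A.
Proof. by rewrite -map_mx_comp map_mx_id // => x /=; rewrite conjCK. Qed.

Section Square.
Variable n : nat.
Implicit Types (A B : 'M[C]_n) (v : 'cV[C]_n).

Lemma psd0 : psd (0 : 'M[C]_n).
Proof. by split=> [|v]; rewrite ?map_mx0 ?trmx0 // mulmx0 mul0mx mxE. Qed.

Lemma psdD A B : psd A -> psd B -> psd (A + B).
Proof.
case=> hermA posA [hermB posB]; split; first by rewrite map_mxD linearD /= -hermA -hermB.
by move=> v; rewrite mulmxDr mulmxDl mxE addr_ge0.
Qed.

Lemma psdZ (k : C) A : 0 <= k -> psd A -> psd (k *: A).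
Proof.
move=> k_ge0 [hermA posA]; split=> [|v]; last by rewrite -scalemxAr -scalemxAl mxE mulr_ge0.
by rewrite map_mxZ linearZ /= -hermA geC0_conj.
Qed.

Lemma psd_sum I (r : seq I) (F : I -> 'M[C]_n) :
  (forall i, psd (F i)) -> psd (\sum_(i <- r) F i).
Proof. by move=> psdF; apply: (big_ind (@psd C n)) => //; [apply: psd0 | apply: psdD]. Qed.

Lemma psd_trmx A : psd A -> psd A^T.
Proof.
case=> hermA posA; split=> [|v]; first by rewrite -map_trmx trmxK {1}hermA trmxK.
have := posA (map_mx Num.conj v); rewrite map_conj_mxK => posAv.
by rewrite -[_ *m v]trmxK [_^T 0 0]mxE !trmx_mul !trmxK mulmxA.
Qed.

End Square.

Lemma psd_proj m1 m2 (v : 'cV[C]_(m1 * m2)) : psd (proj v).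
Proof.
split=> [|u]; first by rewrite /proj map_mxM trmx_mul !map_trmx trmxK map_conj_mxK.
rewrite /proj mulmxA -mulmxA.
have -> : (map_mx Num.conj v)^T *m u = map_mx Num.conj ((map_mx Num.conj u)^T *m v)^T.
  by rewrite trmx_mul map_mxM trmxK map_trmx map_conj_mxK.
by rewrite mxE big_ord1 !mxE mul_conjC_ge0.
Qed.

End PositiveSemidefinite.

Section GridGraphs.
Variables (C : numClosedFieldType) (m1 m2 : nat).
Local Notation vtx := (vtx m1 m2).
Local Notation unvec := (@unvec m1 m2).
Implicit Types (wl wq w : vtx -> vtx -> C) (p q : 'I_(m1 * m2)).

Lemma unvec_mxvec_index i j : unvec (mxvec_index i j) = (i, j).
Proof. by rewrite /unvec /mxvec_index cast_ordK enum_rankK. Qed.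

Lemma unvecK : cancel unvec (fun x : vtx => mxvec_index x.1 x.2).
Proof. by move=> p; rewrite /unvec /mxvec_index -surjective_pairing enum_valK cast_ordKV. Qed.

Lemma vtx_indexK : cancel (fun x : vtx => mxvec_index x.1 x.2) unvec.
Proof. by case=> i j; rewrite unvec_mxvec_index. Qed.

Lemma eq_mxvec_index p (x : vtx) : (p == mxvec_index x.1 x.2) = (unvec p == x).
Proof. by rewrite -{1}(unvecK p) (can_eq vtx_indexK). Qed.

Lemma eq_mxvec_index_pair i j k l :
  (mxvec_index i j == mxvec_index k l :> 'I_(m1 * m2)) = ((i, j) == (k, l)).
Proof. exact: (can_eq vtx_indexK (i, j) (k, l)). Qed.

Local Notation delta p x := ((unvec p == x)%:R : C).

Lemma mul_invsqrtC2_conj (a b : C) :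
  (sqrtC 2)^-1 * a * ((sqrtC 2)^-1 * b)^* = 2^-1 * (a * b^*).
Proof.
rewrite rmorphM /= geC0_conj ?invr_ge0 ?sqrtC_ge0 ?ler0n //.
by rewrite mulrACA -invfM -expr2 sqrtCK.
Qed.

Lemma proj_Lstate_entry x y p q :
  proj (Lstate C x y) p q = 2^-1 * ((delta p x - delta p y) * (delta q x - delta q y)).
Proof.
rewrite /proj mxE big_ord1 !mxE /= !eqxx !andbT !eq_mxvec_index mul_invsqrtC2_conj.
by rewrite rmorphB /= !rmorph_nat.
Qed.

Lemma proj_Qstate_entry x y p q :
  proj (Qstate C x y) p q = 2^-1 * ((delta p x + delta p y) * (delta q x + delta q y)).
Proof.
rewrite /proj mxE big_ord1 !mxE /= !eqxx !andbT !eq_mxvec_index mul_invsqrtC2_conj.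
by rewrite rmorphD /= !rmorph_nat.
Qed.

Lemma sum_delta_mul p (f : vtx -> C) : \sum_x delta p x * f x = f (unvec p).
Proof.
rewrite (bigD1 (unvec p)) //= eqxx mul1r big1 ?addr0 // => x /negbTE.
by rewrite eq_sym => ->; rewrite mul0r.
Qed.

Lemma sum2_delta_row w p q :
  \sum_x \sum_y w x y * (delta p x * delta q x) = delta q (unvec p) * \sum_y w (unvec p) y.
Proof.
rewrite -(sum_delta_mul p (fun x => delta q x * \sum_y w x y)).
by apply: eq_bigr => x _; rewrite !mulr_sumr; apply: eq_bigr => y _; ring.
Qed.

Lemma sum2_delta_col w p q :
  \sum_x \sum_y w x y * (delta p y * delta q y) = delta q (unvec p) * \sum_x w x (unvec p).
Proof. by rewrite exchange_big; exact: (sum2_delta_row (fun y x => w x y)). Qed.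

Lemma sum2_delta_entry w p q :
  \sum_x \sum_y w x y * (delta p x * delta q y) = w (unvec p) (unvec q).
Proof.
rewrite -(sum_delta_mul p (fun x => w x (unvec q))) /=.
apply: eq_bigr => x _; rewrite -(sum_delta_mul q) mulr_sumr.
by apply: eq_bigr => y _; ring.
Qed.

Lemma sum2_delta_entry_tr w p q :
  \sum_x \sum_y w x y * (delta p y * delta q x) = w (unvec q) (unvec p).
Proof. by rewrite exchange_big; exact: (sum2_delta_entry (fun y x => w x y)). Qed.

Lemma Dmat_eq_degree wl wq wl' wq' :
  Dmat wl wq = Dmat wl' wq' -> degree wl wq =1 degree wl' wq'.
Proof.
move=> eq_D x; pose i := mxvec_index x.1 x.2.
have := congr1 (fun M : 'M_(m1 * m2) => M i i) eq_D.
by rewrite !mxE eqxx vtx_indexK.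
Qed.

Lemma eq_total_weight wl wq wl' wq' :
  degree wl wq =1 degree wl' wq' -> total_weight wl wq = total_weight wl' wq'.
Proof. by move=> eq_deg; congr (_ * _); apply: eq_bigr => x _; exact: eq_deg. Qed.

Lemma total_weight_ge0 wl wq :
  (forall x y, 0 <= wl x y) -> (forall x y, 0 <= wq x y) -> 0 <= total_weight wl wq.
Proof.
move=> wl_ge0 wq_ge0; rewrite mulr_ge0 ?invr_ge0 ?ler0n //.
by do 2!(apply: sumr_ge0 => ? _); rewrite addr_ge0.
Qed.

Lemma psd_rho wl wq :
  (forall x y, 0 <= wl x y) -> (forall x y, 0 <= wq x y) -> psd (rho wl wq).
Proof.
move=> wl_ge0 wq_ge0; apply: psdZ; first by rewrite invr_ge0 total_weight_ge0.
apply: psdZ; first by rewrite invr_ge0 ler0n.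
by do 2!(apply: psd_sum => ?); apply: psdD; apply: psdZ => //; apply: psd_proj.
Qed.

Lemma ptgraph_sym w :
  (forall x y, w x y = w y x) -> forall x y, ptgraph w x y = ptgraph w y x.
Proof. by move=> w_sym x y; rewrite /ptgraph w_sym. Qed.

Lemma ptrans2Z (k : C) (A : 'M[C]_(m1 * m2)) : ptrans2 (k *: A) = k *: ptrans2 A.
Proof. by apply/matrixP => p q; rewrite !mxE. Qed.

Lemma ptrans1_trmx (A : 'M[C]_(m1 * m2)) : ptrans1 A = (ptrans2 A)^T.
Proof. by apply/matrixP => p q; rewrite !mxE. Qed.

Definition hybrid_laplacian wl wq : 'M[C]_(m1 * m2) :=
  \matrix_(p, q) ((p == q)%:R * degree wl wq (unvec p)
                  + (wq (unvec p) (unvec q) - wl (unvec p) (unvec q))).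

Lemma rho_laplacian wl wq :
  (forall x y, wl x y = wl y x) -> (forall x y, wq x y = wq y x) ->
  rho wl wq = (2 * total_weight wl wq)^-1 *: hybrid_laplacian wl wq.
Proof.
move=> wl_sym wq_sym; rewrite /rho; set W := total_weight wl wq.
apply/matrixP => p q; rewrite [LHS]mxE [X in _ * X]mxE summxE.
under eq_bigr do rewrite summxE.
under eq_bigr do under eq_bigr do
  rewrite mxE 2![fun_of_matrix (_ *: _) _ _]mxE proj_Lstate_entry proj_Qstate_entry.
pose u x y := wl x y + wq x y; pose v x y := wq x y - wl x y.
rewrite (eq_bigr (fun x => \sum_y 2^-1 *
    (u x y * (delta p x * delta q x) + u x y * (delta p y * delta q y)
   + (v x y * (delta p x * delta q y) + v x y * (delta p y * delta q x)))));
  last by move=> x _; apply: eq_bigr => y _; rewrite /u /v; ring.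
under eq_bigr do rewrite -mulr_sumr !big_split.
rewrite -mulr_sumr !big_split /=.
rewrite sum2_delta_row sum2_delta_col sum2_delta_entry sum2_delta_entry_tr.
have -> : \sum_x u x (unvec p) = degree wl wq (unvec p).
  by apply: eq_bigr => x _; rewrite /u wl_sym wq_sym.
rewrite -/(degree wl wq (unvec p)) /v [wl (unvec q) _]wl_sym [wq (unvec q) _]wq_sym.
rewrite eq_sym (can_eq unvecK) !mxE [(2 * W)^-1]invfM; move: W^-1 => iW.
by field.
Qed.

Lemma ptrans2_laplacian wl wq :
  degree wl wq =1 degree (ptgraph wl) (ptgraph wq) ->
  ptrans2 (hybrid_laplacian wl wq) = hybrid_laplacian (ptgraph wl) (ptgraph wq).
Proof.
move=> eq_deg; apply/matrixP => p q; rewrite !mxE !unvec_mxvec_index; congr (_ + _).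
rewrite eq_mxvec_index_pair -(can_eq unvecK) -eq_deg.
case: (unvec p) => i j; case: (unvec q) => k l /=; rewrite !xpair_eqE.
by have [-> | _] := eqVneq j l; rewrite ?andbF ?mul0r.
Qed.

Lemma ptrans2_rho wl wq :
  (forall x y, wl x y = wl y x) -> (forall x y, wq x y = wq y x) ->
  degree wl wq =1 degree (ptgraph wl) (ptgraph wq) ->
  ptrans2 (rho wl wq) = rho (ptgraph wl) (ptgraph wq).
Proof.
move=> wl_sym wq_sym eq_deg.
have ptwl_sym := ptgraph_sym wl_sym; have ptwq_sym := ptgraph_sym wq_sym.
by rewrite !rho_laplacian // ptrans2Z ptrans2_laplacian // (eq_total_weight eq_deg).
Qed.

End GridGraphs.

Theorem mainTheorem9 (C : numClosedFieldType) (m1 m2 : nat)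
    (wl wq : vtx m1 m2 -> vtx m1 m2 -> C) :
  is_grid_graph wl wq ->
  Dmat wl wq = Dmat (ptgraph wl) (ptgraph wq) ->
  psd (ptrans1 (rho wl wq)) /\ psd (ptrans2 (rho wl wq)).
Proof.
case=> w_ge0 w_sym _ _ /Dmat_eq_degree eq_deg.
have wl_sym x y := (w_sym x y).1; have wq_sym x y := (w_sym x y).2.
have psd_ptrans2 : psd (ptrans2 (rho wl wq)).
  by rewrite ptrans2_rho //; apply: psd_rho => x y; [exact: (w_ge0 _ _).1 | exact: (w_ge0 _ _).2].
by rewrite ptrans1_trmx; split; first exact: psd_trmx.
Qed.
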